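(* Let $(X,S)$ be an aperiodic linearly recurrent subshift with constant $K$ over a finite alphabet $A$, and let $\zeta=\{[a]: a\in A\}$ be the partition into $1$-cylinders. Then for all $x\in X$, $$\frac{1}{K}\leq \underline{\mathcal{R}}_{\zeta}(x)\leq \overline{\mathcal{R}}_{\zeta}(x)\leq K.$$
   Context: $A^{\mathbb Z}$ carries the product topology and the shift $(Sx)_n=x_{n+1}$; a subshift is a closed $S$-invariant $X\subseteq A^{\mathbb Z}$. For $x\in A^{\mathbb Z}$, $L(x)$ is the set of finite words occurring in $x$, and $L(X)=\bigcup_{x\in X}L(x)$. For $u\in L(x)$, a word $w$ is a return word to $u$ (in $x$) if $wu\in L(x)$, $u$ is a prefix of $wu$, and $u$ occurs exactly twice in $wu$. A sequence $x$ is uniformly recurrent if every $u\in L(x)$ occurs infinitely often in $x$ and for each $u\in L(x)$ there is $K_u$ with $|w|\leq K_u|u|$ for every return word $w$ to $u$; $x$ is linearly recurrent with constant $K$ if it is uniformly recurrent and $|w|\leq K|u|$ for all $u\in L(x)$ and all return words $w$ to $u$. A subshift is linearly recurrent with constant $K$ if it is minimal and contains a linearly recurrent sequence with constant $K$; aperiodic means it contains no periodic point. Cylinders: $[u]=\{x\in X: x_0\cdots x_{|u|-1}=u\}$. For measurable $U\subseteq X$, $\tau(U)=\inf\{k\geq1: S^kU\cap U\neq\emptyset\}$; $\zeta_n=\zeta\vee S^{-1}\zeta\vee\cdots\vee S^{-n+1}\zeta$, $\zeta_n(x)$ is the atom containing $x$, $\underline{\mathcal{R}}_{\zeta}(x)=\liminf_n\tau(\zeta_n(x))/n$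 and $\overline{\mathcal{R}}_{\zeta}(x)=\limsup_n\tau(\zeta_n(x))/n$. *)

From HB Require Import structures.
From mathcomp Require Import all_boot all_order all_algebra.
From mathcomp Require Import all_classical all_reals all_analysis.
Set Implicit Arguments. Unset Strict Implicit. Unset Printing Implicit Defensive.
Import Order.TTheory GRing.Theory Num.Theory.
Local Open Scope classical_set_scope.
Local Open Scope ring_scope.

Definition fullshift (A : finType) : Type :=
  prod_topology (fun _ : int => discrete_topology A).

Section Shift.
Variable A : finType.
Local Notation AZ := (fullshift A).

Definition shift (x : AZ) : AZ := fun n => x (n + 1)%R.

Definition shift_invariant (X : set AZ) : Prop := shift @` X `<=` X.

Definition subshift (X : set AZ) : Prop := closed X /\ shift_invariant X.

Definition minimal_subshift (X : set AZ) : Prop :=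
  subshift X /\ X !=set0 /\
  forall Y : set AZ, Y `<=` X -> closed Y -> shift_invariant Y -> Y !=set0 -> Y = X.

Definition periodic (x : AZ) : Prop := exists p : nat, (0 < p)%N /\ iter p shift x = x.

Definition aperiodic (X : set AZ) : Prop := forall x, X x -> ~ periodic x.

Definition occurs_at (x : AZ) (u : seq A) (i : int) : Prop :=
  forall j : nat, (j < size u)%N -> x (i + j%:Z)%R = nth (x i) u j.

Definition lang (x : AZ) : set (seq A) := [set u | exists i, occurs_at x u i].

Definition occ (u v : seq A) : nat :=
  count (fun i => take (size u) (drop i v) == u) (iota 0 (size v - size u).+1).

Definition return_word (x : AZ) (u w : seq A) : Prop :=
  lang x (w ++ u) /\ prefix u (w ++ u) /\ occ u (w ++ u) = 2%N.

Definition occurs_infinitely_often (x : AZ) (u : seq A) : Prop :=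
  ~ finite_set [set i | occurs_at x u i].

Definition uniformly_recurrent (x : AZ) : Prop :=
  (forall u, lang x u -> u != [::] -> occurs_infinitely_often x u) /\
  (forall u, lang x u -> u != [::] -> exists Ku : nat,
      forall w, return_word x u w -> (size w <= Ku * size u)%N).

Definition linearly_recurrent_seq (R : realType) (K : R) (x : AZ) : Prop :=
  uniformly_recurrent x /\
  forall u w, lang x u -> u != [::] -> return_word x u w ->
     (size w)%:R <= K * (size u)%:R.

Definition linearly_recurrent_subshift (R : realType) (K : R) (X : set AZ) : Prop :=
  minimal_subshift X /\ exists x, X x /\ linearly_recurrent_seq K x.

Definition return_time (R : realType) (U : set AZ) : \bar R :=
  ereal_inf [set (k%:R)%:E | k in [set k : nat |
     (0 < k)%N /\ (iter k shift @` U) `&` U !=set0]].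

(** atom of zeta_n = zeta v S^-1 zeta v ... v S^-(n-1) zeta (zeta the
    partition of X into 1-cylinders) containing x *)
Definition atom (X : set AZ) (n : nat) (x : AZ) : set AZ :=
  [set y | X y /\ forall i : nat, (i < n)%N -> y i%:Z = x i%:Z].

(** the sequence tau(zeta_n(x))/n, n >= 1 (indexed from 0 via n.+1) *)
Definition rec_ratio (R : realType) (X : set AZ) (x : AZ) : nat -> \bar R :=
  fun n => (return_time R (atom X n.+1 x) * ((n.+1)%:R^-1)%:E)%E.

End Shift.

From Pilot Require Import Defs.
From HB Require Import structures.
From mathcomp Require Import all_boot all_order all_algebra.
From mathcomp Require Import all_classical all_reals all_analysis.
From mathcomp Require Import zify.
Set Implicit Arguments. Unset Strict Implicit. Unset Printing Implicit Defensive.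
Import Order.TTheory GRing.Theory Num.Theory.
Local Open Scope classical_set_scope.
Local Open Scope ring_scope.

(* The atom zeta_n(x) is the cylinder of the word u = x_0 ... x_{n-1}, and it
   meets its k-th shift iff u reoccurs k places later somewhere in X.  By
   minimality u occurs in the linearly recurrent point x0, and the next
   occurrence comes after a return word of length at most K n, so
   tau(zeta_n(x)) <= K n.  Conversely, a return after k steps with
   K (k + 1) <= n yields a point of X with a k-periodic window of length
   n + k.  Every word of length k + 1 of x0 reoccurs within every stretch of
   length n of x0, hence inside an occurrence of that window, which forces x0
   to be k-periodic.  By aperiodicity tau(zeta_n(x)) > n / K - 1. *)

Section Words.
Variable A : finType.
Local Notation AZ := (fullshift A).
Local Notation shiftA := (@Defs.shift A).
Implicit Types (x y : AZ) (u : seq A) (i j : int) (n : nat).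

Definition word x i n : seq A := mkseq (fun t => x (i + t%:Z)) n.

Lemma size_word x i n : size (word x i n) = n.
Proof. exact: size_mkseq. Qed.

Lemma nth_word x i n t d : (t < n)%N -> nth d (word x i n) t = x (i + t%:Z).
Proof. exact: nth_mkseq. Qed.

Lemma occursP x u i : occurs_at x u i <-> word x i (size u) = u.
Proof.
split=> [xu | <- t]; last by rewrite size_word => tu; rewrite nth_word.
apply: (@eq_from_nth _ (x i)); first by rewrite size_word.
by move=> t; rewrite size_word => tu; rewrite nth_word // xu.
Qed.

Lemma occurs_word x i n : occurs_at x (word x i n) i.
Proof. by apply/occursP; rewrite size_word. Qed.

Lemma occurs_wordE x y i j n t : occurs_at x (word y j n) i -> (t < n)%N ->
  x (i + t%:Z) = y (j + t%:Z).
Proof. by move=> xw tn; rewrite xw ?size_word // nth_word. Qed.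

Lemma word_cat x i m n : word x i (m + n) = word x i m ++ word x (i + m%:Z) n.
Proof.
rewrite /word /mkseq iotaD map_cat add0n; congr (_ ++ _).
rewrite -[m in iota m n]addn0 iotaDl -map_comp.
by apply: eq_map => t /=; rewrite PoszD addrA.
Qed.

Lemma take_word x i n k : (k <= n)%N -> take k (word x i n) = word x i k.
Proof. by move=> kn; rewrite -(subnKC kn) word_cat take_size_cat ?size_word. Qed.

Lemma drop_word x i n k : (k <= n)%N ->
  drop k (word x i n) = word x (i + k%:Z) (n - k).
Proof.
by move=> kn; rewrite -{1}(subnKC kn) word_cat drop_size_cat ?size_word.
Qed.

Lemma iter_shiftE k y i : iter k shiftA y i = y (i + k%:Z).
Proof.
elim: k y i => [|k IH] y i /=; first by rewrite addr0.
by rewrite /Defs.shift IH -addrA; congr (y (_ + _)); lia.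
Qed.

Lemma occurs_iter_shift k y u i :
  occurs_at (iter k shiftA y) u i <-> occurs_at y u (i + k%:Z).
Proof.
have E t : iter k shiftA y (i + t%:Z) = y (i + k%:Z + t%:Z).
  by rewrite iter_shiftE; congr y; lia.
have E0 := E 0%N; rewrite !addr0 in E0.
split=> yu t tu; move: (yu t tu).
  by rewrite E E0.
by rewrite -E -E0.
Qed.

End Words.

Lemma consecutive_around (P : int -> Prop) (a0 b0 i : int) :
  P a0 -> P b0 -> a0 <= i < b0 ->
  exists a c, [/\ a0 <= a <= i, i < c, P a, P c & forall e, a < e < c -> ~ P e].
Proof.
have [d] := ubnP `|b0 - a0|%N.
elim: d a0 b0 => [|d IH] a0 b0 hd Pa0 Pb0 /andP[a0i ib0]; first lia.
have [[e [/andP[a0e eb0] Pe]]|between] := pselect (exists e, a0 < e < b0 /\ P e).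
  have [ei|ie] := lerP e i.
    have [a [c [/andP[ea ai] ic Pa Pc gap]]] := IH e b0 ltac:(lia) Pe Pb0 ltac:(lia).
    by exists a, c; split=> //; apply/andP; split=> //; lia.
  by apply: (IH a0 e) => //; lia.
exists a0, b0; split=> //; first by rewrite lexx.
by move=> e ae Pe; apply: between; exists e.
Qed.

Section ReturnWords.
Variable A : finType.
Local Notation AZ := (fullshift A).
Implicit Types (x : AZ) (z : seq A) (a c i j b : int).

Lemma return_word_consecutive x z a c : z != [::] -> a < c ->
  occurs_at x z a -> occurs_at x z c ->
  (forall e, a < e < c -> ~ occurs_at x z e) ->
  return_word x z (word x a `|c - a|%N).
Proof.
move=> zn ac /occursP wa /occursP wc between.
set L := `|c - a|%N; have cE : c = a + L%:Z by rewrite /L; lia.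
have L0 : (0 < L)%N by rewrite /L; lia.
have wz : word x a L ++ z = word x a (L + size z).
  by rewrite word_cat -cE wc.
split; first by rewrite wz; exists a; exact: occurs_word.
split; first by rewrite wz prefixE take_word ?leq_addl // wa.
rewrite wz /occ size_word addnK.
rewrite (@eq_in_count _ _ (fun t => (t == 0)%N || (t == L))); last first.
  move=> t; rewrite mem_iota add0n ltnS => /andP[_ tL].
  rewrite drop_word ?(leq_trans tL) ?leq_addr // take_word; last by lia.
  have [->|t0] := eqVneq t 0%N; first by rewrite addr0 wa !eqxx.
  have [->|tL'] := eqVneq t L; first by rewrite -cE wc !eqxx orbT.
  apply/negbTE/eqP => /occursP; apply: between; lia.
clearbody L; case: L L0 {cE wz} => // L' _.
rewrite -[L'.+2]addn1 -add1n !iotaD !count_cat.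
rewrite (@eq_in_count _ _ pred0 (iota (0 + 1) L')); last first.
  by move=> t; rewrite mem_iota => /andP[t1 tL] /=; apply/negbTE; lia.
by rewrite count_pred0 /= eqxx; lia.
Qed.

Lemma next_return x z i b : z != [::] -> i < b ->
  occurs_at x z i -> occurs_at x z b ->
  exists c, [/\ i < c, occurs_at x z c & return_word x z (word x i `|c - i|%N)].
Proof.
move=> zn ib oi ob.
have [a [c [/andP[ia ai] ic oa oc between]]] :=
  consecutive_around oi ob (ltac:(by rewrite lexx) : i <= i < b).
have ai' : a = i by apply/eqP; rewrite eq_le ai ia.
subst a; exists c; split=> //; exact: return_word_consecutive.
Qed.

Lemma occurs_in_window x z (L : nat) j i b : z != [::] ->
  (forall w, return_word x z w -> (size w <= L)%N) ->
  occurs_at x z j -> occurs_at x z b -> j < i <= b ->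
  exists c, i <= c < i + L%:Z /\ occurs_at x z c.
Proof.
move=> zn short oj ob /andP[ji ib].
have [a [c [/andP[_ ai] ic oa oc between]]] :=
  consecutive_around oj ob (ltac:(apply/andP; split; lia) : j <= i - 1 < b).
have := short _ (return_word_consecutive zn (le_lt_trans ai ic) oa oc between).
rewrite size_word => caL; exists c; split=> //; lia.
Qed.

End ReturnWords.

Section Minimality.
Variable A : finType.
Local Notation AZ := (fullshift A).
Local Notation shiftA := (@Defs.shift A).
Implicit Types (X : set AZ) (x y : AZ) (u : seq A).

Lemma nbhs_occurs_at x u i : occurs_at x u i -> nbhs x [set y | occurs_at y u i].
Proof.
move=> xu.
have cyl m : nbhs x [set y : AZ | forall t, (t < m)%N -> y (i + t%:Z) = x (i + t%:Z)].
  elim: m => [|m IH]; first exact: filterS (@filterT _ (nbhs x) _).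
  have xm : nbhs x [set y : AZ | y (i + m%:Z) = x (i + m%:Z)].
    exact: (@proj_continuous int (fun _ => discrete_topology A) _ x _ (discrete_set1 _)).
  apply: filterS (filterI IH xm) => y [yx ym] t.
  by rewrite ltnS leq_eqVlt => /orP[/eqP ->|]; last exact: yx.
apply: filterS (cyl (size u)) => y yx t tu.
have y0 := yx 0%N; rewrite addr0 in y0.
by rewrite yx // xu // (set_nth_default (x i)) // -y0 ?(leq_ltn_trans _ tu).
Qed.

Lemma shift_invariant_iter X k y : shift_invariant X -> X y ->
  X (iter k shiftA y).
Proof.
move=> invX Xy; elim: k => [|k IH] //=.
by apply: invX; exists (iter k shiftA y).
Qed.

Lemma minimal_occurs_far X x0 x u : minimal_subshift X -> X x0 -> X x ->
  lang x u -> forall N : int, exists2 i, N <= i & occurs_at x0 u i.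
Proof.
move=> [[clX invX] [_ minX]] Xx0 Xx [a xu] N.
(* Recording an offset k >= M, rather than a position, makes iter M shiftA x0
   a member of D M. *)
pose D (M : nat) := [set y : AZ | forall v b, occurs_at y v b ->
  exists2 k, M%:Z <= k & occurs_at x0 v (b + k)].
suff XD M : X `&` D M = X.
  have : (X `&` D `|N - a|%N) x by rewrite XD.
  case=> _ /(_ u a xu) [k Mk x0u]; exists (a + k) => //; lia.
apply: minX.
- exact: subIsetl.
- apply: closedI => // y cly v b yv.
  have [y' [Dy' y'v]] := cly _ (nbhs_occurs_at yv).
  exact: Dy'.
- move=> _ [y [Xy Dy] <-]; split; first by apply: invX; exists y.
  move=> v b /(occurs_iter_shift 1) /Dy [k Mk x0v].
  by exists (k + 1); [lia | have -> : b + (k + 1) = b + 1 + k by lia].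
- exists (iter M shiftA x0); split; first exact: shift_invariant_iter invX Xx0.
  by move=> v b /occurs_iter_shift x0v; exists M%:Z.
Qed.

Lemma atomE X n x y : atom X n x y <-> X y /\ occurs_at y (word x 0 n) 0.
Proof.
split=> -[Xy yx]; split=> // t tn.
  by rewrite size_word in tn; rewrite add0r nth_word // add0r yx.
by have := occurs_wordE yx tn; rewrite !add0r.
Qed.

End Minimality.

Section LinearRecurrence.
Variables (R : realType) (A : finType) (K : R) (X : set (fullshift A)).
Variable x0 : fullshift A.
Hypotheses (minX : minimal_subshift X) (Xx0 : X x0).
Hypothesis lrx0 : linearly_recurrent_seq K x0.
Local Notation shiftA := (@Defs.shift A).

Lemma atom_return_le x n : X x -> (0 < n)%N ->
  exists2 k : nat, (0 < k)%N /\ k%:R <= K * n%:R &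
    (iter k shiftA @` atom X n x) `&` atom X n x !=set0.
Proof.
move=> Xx n0; set u := word x 0 n.
have un : u != [::] by rewrite -size_eq0 size_word -lt0n.
have xu : lang x u by exists 0; exact: occurs_word.
have [i i0 oi] := minimal_occurs_far minX Xx0 Xx xu 0.
have [b ib ob] := minimal_occurs_far minX Xx0 Xx xu (i + 1).
have [c [ic oc ret]] := next_return un (ltac:(lia) : i < b) oi ob.
have := lrx0.2 _ _ (ex_intro _ i oi) un ret; rewrite !size_word => cK.
pose p := `|i|%N; pose k := `|c - i|%N.
have invX := minX.1.2.
exists k; first by split=> //; lia.
exists (iter k shiftA (iter p shiftA x0)); split.
  exists (iter p shiftA x0) => //; apply/atomE.
  split; first exact: shift_invariant_iter.
  by apply/occurs_iter_shift; have -> : 0 + p%:Z = i by lia.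
rewrite -iterD; apply/atomE; split; first exact: shift_invariant_iter.
by apply/occurs_iter_shift; have -> : 0 + (k + p)%N%:Z = c by lia.
Qed.

Lemma lin_rec_const_gt0 : 0 < K.
Proof.
have [k [k0 kK] _] := atom_return_le Xx0 (ltn0Sn 0).
by rewrite mulr1 in kK; apply: lt_le_trans kK; rewrite ltr0n.
Qed.

Lemma return_time_atom_le x n : X x -> (0 < n)%N ->
  (return_time R (atom X n x) <= (K * n%:R)%:E)%E.
Proof.
move=> Xx n0; have [k [k0 kK] meet] := atom_return_le Xx n0.
apply: (@le_trans _ _ (k%:R)%:E); last by rewrite lee_fin.
by apply: ereal_inf_lbound; exists k.
Qed.

Hypothesis aperX : aperiodic X.

Lemma periodic_of_window y n k : X y -> K * k.+1%:R <= n%:R ->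
  (forall s : nat, (s < n)%N -> y s%:Z = y (s + k)%N%:Z) ->
  forall j, x0 (j + k%:Z) = x0 j.
Proof.
move=> Xy Kn yper j.
set z := word x0 j k.+1.
have zn : z != [::] by rewrite -size_eq0 size_word.
have oj : occurs_at x0 z j by exact: occurs_word.
have x0z : lang x0 z by exists j.
have yv : lang y (word y 0 (n + k)) by exists 0; exact: occurs_word.
have [i ji oi] := minimal_occurs_far minX Xx0 Xy yv (j + 1).
have [b ib ob] := minimal_occurs_far minX Xx0 Xx0 x0z i.
have short w : return_word x0 z w -> (size w <= n)%N.
  move=> zw; have := lrx0.2 _ _ x0z zn zw; rewrite size_word => wK.
  by rewrite -(ler_nat R); apply: le_trans wK Kn.
have [c [/andP[ic cin] oc]] :=
  occurs_in_window zn short oj ob (ltac:(lia) : j < i <= b).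
set s := `|c - i|%N.
have x0y t : (t < n + k)%N -> x0 (i + t%:Z) = y t%:Z.
  by move=> tn; rewrite (occurs_wordE oi tn) add0r.
have x0c t : (t <= k)%N -> x0 (c + t%:Z) = x0 (j + t%:Z).
  exact: occurs_wordE oc.
have cs : c = i + s%:Z by lia.
have sn : (s < n)%N by lia.
rewrite -[in RHS](addr0 j) -(x0c k) // -(x0c 0%N) // cs -!addrA -!PoszD.
by rewrite addn0 !x0y ?(yper s sn) //; lia.
Qed.

Lemma atom_return_gt x n k : (0 < k)%N ->
  (iter k shiftA @` atom X n x) `&` atom X n x !=set0 -> n%:R < K * k.+1%:R.
Proof.
move=> k0 [_ [[y [Xy yx] <-] [_ kyx]]]; rewrite ltNge; apply/negP => Kn.
apply: (aperX Xx0); exists k; split=> //.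
apply: functional_extensionality_dep => j; rewrite iter_shiftE.
apply: (periodic_of_window Xy Kn) => s sn.
by rewrite yx // -kyx // iter_shiftE PoszD.
Qed.

Lemma return_time_atom_ge x n : ((n%:R / K - 1)%:E <= return_time R (atom X n x))%E.
Proof.
apply: le_ereal_inf_tmp => _ [k [k0 meet] <-].
rewrite lee_fin lerBlDr ler_pdivrMr ?lin_rec_const_gt0 // mulrC natr1.
exact/ltW/(atom_return_gt k0 meet).
Qed.

End LinearRecurrence.

Section LimInfSup.
Variable R : realType.
Implicit Types (u v : (\bar R)^nat) (l : \bar R).
Local Open Scope ereal_scope.

Lemma limn_esup_le u l : (forall n, u n <= l) -> limn_esup u <= l.
Proof.
move=> ul; rewrite limn_esup_lim; apply: lime_le; first exact: is_cvg_esups.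
by apply: nearW => n; apply: ge_ereal_sup => _ [m _ <-].
Qed.

Lemma limn_einf_ge_cvg u v l : v @ \oo --> l -> (forall n, v n <= u n) ->
  l <= limn_einf u.
Proof.
move=> vl vu; have [<- _] := cvg_limn_einf_sup vl; rewrite !limn_einf_lim.
apply: lee_lim; [exact: is_cvg_einfs | exact: is_cvg_einfs |].
apply: nearW => n; apply: le_ereal_inf_tmp => _ [m /= nm <-].
by apply: le_trans (vu m); apply: ereal_inf_lbound; exists m.
Qed.

End LimInfSup.

Theorem proposition2p2 (R : realType) (A : finType) (K : R)
  (X : set (fullshift A)) :
  linearly_recurrent_subshift K X -> aperiodic X ->
  forall x, X x ->
    ((K^-1)%:E <= limn_einf (rec_ratio R X x))%E /\
    (limn_einf (rec_ratio R X x) <= limn_esup (rec_ratio R X x))%E /\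
    (limn_esup (rec_ratio R X x) <= K%:E)%E.
Proof.
move=> [minX [x0 [Xx0 lrx0]]] aperX x Xx.
have K0 := lin_rec_const_gt0 minX Xx0 lrx0.
split; [|split; [exact: limn_einf_sup|]]; last first.
  apply: limn_esup_le => n; rewrite /rec_ratio lee_pdivrMr // -EFinM.
  by apply: (return_time_atom_le minX Xx0 lrx0).
apply: (@limn_einf_ge_cvg _ _ (fun n => (K^-1 - n.+1%:R^-1)%:E)).
  apply: cvg_EFin; first exact: nearW.
  by rewrite -[X in _ --> X]subr0; apply: cvgB; [exact: cvg_cst | exact: cvg_harmonic].
move=> n; rewrite /rec_ratio lee_pdivlMr // -EFinM.
apply: le_trans (return_time_atom_ge minX Xx0 lrx0 aperX x n.+1).
by rewrite lee_fin mulrBl mulVf ?pnatr_eq0 // mulrC.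
Qed.
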